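(* Let $\mathcal{E}=(\mathbf{R},\mathbf{S},\Sigma_{st},\mathbf{F})$ be a consistent constructive relational to RDF data exchange setting, $I$ a consistent instance of $\mathbf{R}$, $E$ a forward nested regular expression, and $\mathcal{U}$ a universal simulation solution for $I$ w.r.t. $\mathcal{E}$. A pair $(n,m)$ is a certain answer to $E$ in $I$ w.r.t. $\mathcal{E}$ if and only if $(n,m)\in[\![E]\!]_{\mathcal{U}}$ and neither $n$ nor $m$ is a null value.
   Context: Values: $\mathsf{Iri}$ (IRIs, containing predicates $\mathsf{Pred}$), $\mathsf{NullIri}$, $\mathsf{Lit}$ with null literals $\mathsf{NullLit}\subseteq\mathsf{Lit}$; null values are those in $\mathsf{NullLit}\cup\mathsf{NullIri}$. $\mathbf{R}=(\mathcal{R},\Sigma_{fd})$: relation names with arities and functional dependencies; an instance assigns finite sets of tuples of non-null literals; consistent instances satisfy $\Sigma_{fd}$. Typed graph: finite set of triples $(s,p,o)$, $s\in\mathsf{Iri}\cup\mathsf{NullIri}$, $p\in\mathsf{Pred}$, $o\in\mathsf{Iri}\cup\mathsf{NullIri}\cup\mathsf{Lit}$, with type facts $T(n)$ ($T\in\mathcal{T}$), $\mathit{Literal}(n)$. Deterministic shape schema $\mathbf{S}=(\mathcal{T},\delta)$: partial $\delta:\mathcal{T}\times\mathsf{Pred}\to(\mathcal{T}\cup\{\mathit{Literal}\})\times\{1,?,*,+\}$; satisfaction: for each $\delta(T,p)=S^\mu$, $p$-successors of $T$-typed nodes have type $S$, at most one if $\mu\in\{1,?\}$, at least one if $\mu\in\{1,+\}$.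 Constructive setting: IRI constructors $f\in\mathcal{F}$ interpreted as $f^F:\mathsf{Lit}^n\to\mathsf{Iri}$ (constants) with pairwise disjoint ranges; full st-tgds $\forall\bar x.\,\varphi\Rightarrow\psi$, $\varphi$ over $\mathcal{R}$, $\psi$ a conjunction of atoms $\mathit{Triple}(t_1,p,t_2)$, $T(t)$, $\mathit{Literal}(t)$, terms variables or $f(\bar u)$. Solution for $I$: typed graph satisfying $\mathbf{S}$ and, together with $I$, $\Sigma_{st}$; $\mathcal{E}$ consistent if each consistent instance has one. Simulation: relation $R$ between nodes of $G$ and $H$ such that for $(n,m)\in R$: $n$ literal iff $m$ literal; if $n$ non-null then $n=m$; each edge $(n,p,n')\in G$ matched by some $(m,p,m')\in H$ with $(n',m')\in R$; $G$ simulated by $H$ if every node of $G$ is related to some node of $H$. A universal simulation solution for $I$: a solution simulated by every solution for $I$. Forward NREs: $E::=\epsilon\mid p\mid\Box\mid\langle\ell\rangle\mid[E]\mid E^*\mid E\cdot E\mid E+E$ with semantics: identity on nodes, $p$-edges, all edges, $\{(\ell,\ell)\}$ if $\ell$ is a node, $\{(n,n)\mid\exists m.(n,m)\in[\![E]\!]_G\}$, union, composition, reflexive-transitive closure. $(n,m)$ is a certain answer to $E$ in $I$ w.r.t. $\mathcal{E}$ iff $(n,m)\in[\![E]\!]_J$ for every solution $J$ for $I$. *)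

From Stdlib Require Import List Relations.
Import ListNotations.
Set Implicit Arguments.

(* Iri (with the subset Pred given by isPred), NullIri, Lit (with the subset
   NullLit given by isNullLit). The three carriers are disjoint by
   construction of [node] below. *)
Record Univ := mkUniv {
  Iri : Type;
  NullIri : Type;
  Lit : Type;
  isPred : Iri -> Prop;
  isNullLit : Lit -> Prop }.

(* Standard assumption: there are infinitely many null IRIs and null literals. *)
Definition univ_ok (V : Univ) : Prop :=
  (forall l : list (NullIri V), exists x, ~ In x l) /\
  (forall l : list (Lit V), exists x, isNullLit V x /\ ~ In x l).

Section DataExchange.
Variable V : Univ.

Inductive node : Type :=
| NIri (i : Iri V)
| NNull (k : NullIri V)
| NLit (l : Lit V).

Definition is_null (n : node) : Prop :=
  match n with NNull _ => True | NLit l => isNullLit V l | NIri _ => False end.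

Definition is_literal (n : node) : Prop :=
  match n with NLit _ => True | _ => False end.

Record rel_schema := {
  Rn : Type;
  rarity : Rn -> nat;
  rnames : list Rn;
  rnames_all : forall r, In r rnames;
  fds : list (Rn * list nat * list nat) (* r : X -> Y, positions 0..arity-1 *)
}.

Definition rel_schema_wf (RS : rel_schema) : Prop :=
  forall r X Y, In (r, X, Y) (fds RS) ->
    (forall i, In i X -> i < rarity RS r) /\ (forall j, In j Y -> j < rarity RS r).

Definition instance (RS : rel_schema) := Rn RS -> list (list (Lit V)).

Definition instance_wf (RS : rel_schema) (I : instance RS) : Prop :=
  forall r t, In t (I r) ->
    length t = rarity RS r /\ (forall l, In l t -> ~ isNullLit V l).

Definition fd_sat (RS : rel_schema) (I : instance RS) : Prop :=
  forall r X Y, In (r, X, Y) (fds RS) ->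
    forall t1 t2, In t1 (I r) -> In t2 (I r) ->
      (forall i, In i X -> nth_error t1 i = nth_error t2 i) ->
      (forall j, In j Y -> nth_error t1 j = nth_error t2 j).

Inductive mult := M1 | MOpt | MStar | MPlus.

Inductive stype (Tn : Type) := STy (T : Tn) | SLiteral.

Record shape_schema := {
  Tn : Type;
  tnames : list Tn;
  tnames_all : forall T, In T tnames;
  delta : Tn -> Iri V -> option (stype Tn * mult)
}.

Definition shape_schema_wf (S : shape_schema) : Prop :=
  forall T p st, delta S T p = Some st -> isPred V p.

Record tgraph (Tn : Type) := {
  triples : list (node * Iri V * node);
  tfacts : list (Tn * node);
  lfacts : list node
}.

Definition tgraph_wf (Tn : Type) (G : tgraph Tn) : Prop :=
  forall s p o, In (s, p, o) (triples G) ->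
    (match s with NLit _ => False | _ => True end) /\ isPred V p.

Definition has_type (Tn : Type) (G : tgraph Tn) (S : stype Tn) (n : node) : Prop :=
  match S with
  | STy T => In (T, n) (tfacts G)
  | SLiteral _ => In n (lfacts G)
  end.

Definition satisfies (S : shape_schema) (G : tgraph (Tn S)) : Prop :=
  forall T p St mu, delta S T p = Some (St, mu) ->
  forall n, In (T, n) (tfacts G) ->
    (forall o, In (n, p, o) (triples G) -> has_type G St o) /\
    ((mu = M1 \/ mu = MOpt) ->
       forall o1 o2, In (n, p, o1) (triples G) -> In (n, p, o2) (triples G) -> o1 = o2) /\
    ((mu = M1 \/ mu = MPlus) -> exists o, In (n, p, o) (triples G)).

Record constructors := {
  Fn : Type;
  farity : Fn -> nat;
  finterp : Fn -> list (Lit V) -> Iri V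
}.

Definition constructors_wf (F : constructors) : Prop :=
  forall f g u v, f <> g -> length u = farity F f -> length v = farity F g ->
    finterp F f u <> finterp F g v.

Inductive hterm (Fn : Type) := HVar (x : nat) | HFun (f : Fn) (xs : list nat).

Inductive hatom (Fn Tn : Type) :=
| HTriple (t1 : hterm Fn) (p : Iri V) (t2 : hterm Fn)
| HType (T : Tn) (t : hterm Fn)
| HLiteral (t : hterm Fn).

Record tgd (Rn Fn Tn : Type) := {
  body : list (Rn * list nat);
  head : list (hatom Fn Tn)
}.

Definition hterm_vars (Fn : Type) (t : hterm Fn) : list nat :=
  match t with HVar _ x => [x] | HFun f xs => xs end.

Definition hatom_terms (Fn Tn : Type) (a : hatom Fn Tn) : list (hterm Fn) :=
  match a with
  | HTriple _ t1 _ t2 => [t1; t2]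
  | HType _ t => [t]
  | HLiteral _ t => [t]
  end.

Record setting := {
  RS : rel_schema;
  SS : shape_schema;
  FF : constructors;
  tgds : list (tgd (Rn RS) (Fn FF) (Tn SS))
}.

Definition tgd_wf (E : setting) (d : tgd (Rn (RS E)) (Fn (FF E)) (Tn (SS E))) : Prop :=
  (forall r xs, In (r, xs) (body d) -> length xs = rarity (RS E) r) /\
  (forall a, In a (head d) ->
     (match a with HTriple _ _ p _ => isPred V p | _ => True end) /\
     forall t, In t (hatom_terms a) ->
       (match t with HFun f xs => length xs = farity (FF E) f | _ => True end) /\
       forall x, In x (hterm_vars t) -> exists r xs, In (r, xs) (body d) /\ In x xs).

Definition setting_wf (E : setting) : Prop :=
  rel_schema_wf (RS E) /\ shape_schema_wf (SS E) /\ constructors_wf (FF E) /\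
  forall d, In d (tgds E) -> tgd_wf E d.

Definition eval_hterm (E : setting) (val : nat -> Lit V) (t : hterm (Fn (FF E))) : node :=
  match t with
  | HVar _ x => NLit (val x)
  | HFun f xs => NIri (finterp (FF E) f (map val xs))
  end.

Definition hatom_holds (E : setting) (G : tgraph (Tn (SS E))) (val : nat -> Lit V)
  (a : hatom (Fn (FF E)) (Tn (SS E))) : Prop :=
  match a with
  | HTriple _ t1 p t2 => In (eval_hterm E val t1, p, eval_hterm E val t2) (triples G)
  | HType T t => In (T, eval_hterm E val t) (tfacts G)
  | HLiteral _ t => In (eval_hterm E val t) (lfacts G)
  end.

Definition tgd_sat (E : setting) (I : instance (RS E)) (G : tgraph (Tn (SS E)))
  (d : tgd (Rn (RS E)) (Fn (FF E)) (Tn (SS E))) : Prop :=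
  forall val : nat -> Lit V,
    (forall r xs, In (r, xs) (body d) -> In (map val xs) (I r)) ->
    forall a, In a (head d) -> hatom_holds E G val a.

Definition consistent_instance (E : setting) (I : instance (RS E)) : Prop :=
  instance_wf I /\ fd_sat I.

Definition solution (E : setting) (I : instance (RS E)) (G : tgraph (Tn (SS E))) : Prop :=
  tgraph_wf G /\ @satisfies (SS E) G /\ forall d, In d (tgds E) -> @tgd_sat E I G d.

Definition setting_consistent (E : setting) : Prop :=
  forall I : instance (RS E), @consistent_instance E I -> exists G, @solution E I G.

Definition node_of (Tn : Type) (G : tgraph Tn) (n : node) : Prop :=
  (exists p o, In (n, p, o) (triples G)) \/ (exists s p, In (s, p, n) (triples G)) \/
  (exists T, In (T, n) (tfacts G)) \/ In n (lfacts G).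

Definition simulation (Tn : Type) (G H : tgraph Tn) (R : node -> node -> Prop) : Prop :=
  forall n m, R n m ->
    node_of G n /\ node_of H m /\
    (is_literal n <-> is_literal m) /\
    (~ is_null n -> n = m) /\
    (forall p n', In (n, p, n') (triples G) ->
       exists m', In (m, p, m') (triples H) /\ R n' m').

Definition simulated (Tn : Type) (G H : tgraph Tn) : Prop :=
  exists R, simulation G H R /\ forall n, node_of G n -> exists m, R n m.

Definition universal_sim_solution (E : setting) (I : instance (RS E))
  (U : tgraph (Tn (SS E))) : Prop :=
  @solution E I U /\ forall J, @solution E I J -> simulated U J.

Inductive nre :=
| NEps
| NPred (p : Iri V)
| NBox
| NTest (l : node)
| NNest (e : nre)
| NStar (e : nre)
| NConcat (e1 e2 : nre)
| NUnion (e1 e2 : nre).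

Fixpoint nre_sem (Tn : Type) (G : tgraph Tn) (e : nre) : node -> node -> Prop :=
  match e with
  | NEps => fun n m => node_of G n /\ n = m
  | NPred p => fun n m => In (n, p, m) (triples G)
  | NBox => fun n m => exists p, In (n, p, m) (triples G)
  | NTest l => fun n m => n = l /\ m = l /\ node_of G l
  | NNest e1 => fun n m => n = m /\ exists k, nre_sem G e1 n k
  | NStar e1 => fun n m => (node_of G n /\ n = m) \/ clos_trans node (nre_sem G e1) n m
  | NConcat e1 e2 => fun n m => exists k, nre_sem G e1 n k /\ nre_sem G e2 k m
  | NUnion e1 e2 => fun n m => nre_sem G e1 n m \/ nre_sem G e2 n m
  end.

Fixpoint nre_const_tests (e : nre) : Prop :=
  match e with
  | NEps | NPred _ | NBox => True
  | NTest l => ~ is_null l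
  | NNest e1 | NStar e1 => nre_const_tests e1
  | NConcat e1 e2 | NUnion e1 e2 => nre_const_tests e1 /\ nre_const_tests e2
  end.

Definition certain_answer (E : setting) (I : instance (RS E)) (e : nre) (n m : node) : Prop :=
  forall J, @solution E I J -> nre_sem J e n m.

End DataExchange.

Arguments consistent_instance {V E} I.
Arguments solution {V E} I G.
Arguments tgd_sat {V E} I G d.
Arguments universal_sim_solution {V E} I U.
Arguments certain_answer {V E} I e n m.
Arguments setting_consistent {V} E.
Arguments setting_wf {V} E.

(* Answers to a forward NRE with constant node tests are transported along
   simulations, so an answer in the universal solution U between two constants
   is an answer in every solution.  Conversely, a certain answer is an answer
   in U; and no null can occur in it, because head terms of full st-tgds only
   evaluate to constants, so renaming a null of U to a fresh null of the same
   kind yields another solution in which the old null does not occur. *)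
From Stdlib Require Import List Relations ClassicalDescription.
Import ListNotations.
Set Implicit Arguments.
Unset Strict Implicit.

Section Graphs.
Variables (V : Univ) (Tn : Type).
Implicit Types (G H : tgraph V Tn) (e : nre V) (f : node V -> node V).

Lemma nre_sem_node_of G e a b : nre_sem G e a b -> node_of G a /\ node_of G b.
Proof.
  revert a b; induction e; simpl; intros a b Hab.
  - destruct Hab as [Ha <-]; auto.
  - split; [left | right; left]; eauto.
  - destruct Hab as [p Hp]; split; [left | right; left]; eauto.
  - destruct Hab as [-> [-> Hl]]; auto.
  - destruct Hab as [<- [k Hk]]; split; apply (IHe _ _ Hk).
  - destruct Hab as [[Ha <-] | Hab]; [auto |].
    induction Hab as [x y Hxy | x y z _ [Hx _] _ [_ Hz]]; auto.
  - destruct Hab as [k [Hak Hkb]].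
    split; [apply (IHe1 _ _ Hak) | apply (IHe2 _ _ Hkb)].
  - destruct Hab as [Hab | Hab]; [apply IHe1 | apply IHe2]; exact Hab.
Qed.

Lemma nre_sem_simulation G H R e :
  simulation G H R -> nre_const_tests e ->
  forall a b a', nre_sem G e a b -> R a a' ->
  exists b', nre_sem H e a' b' /\ R b b'.
Proof.
  intros HR; induction e; simpl; intros He a b a' Hab Ra;
    pose proof (HR _ _ Ra) as [_ [Ha' [_ [Hconst Hstep]]]].
  - destruct Hab as [_ <-]; eauto.
  - destruct (Hstep _ _ Hab) as [b' [? ?]]; eauto.
  - destruct Hab as [p Hp]; destruct (Hstep _ _ Hp) as [b' [? ?]]; eauto.
  - destruct Hab as [-> [-> _]]; specialize (Hconst He); subst a'; eauto.
  - destruct Hab as [<- [k Hk]]; destruct (IHe He _ _ _ Hk Ra) as [k' [? _]]; eauto.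
  - destruct Hab as [[_ <-] | Hab]; [eauto |].
    clear Ha' Hconst Hstep; revert a' Ra.
    induction Hab as [x y Hxy | x y z _ IHxy _ IHyz]; intros a' Ra.
    + destruct (IHe He _ _ _ Hxy Ra) as [b' [? ?]].
      exists b'; split; [right; apply t_step |]; auto.
    + destruct (IHxy _ Ra) as [y' [Hy' Ry]], (IHyz _ Ry) as [z' [Hz' Rz]].
      exists z'; split; [| exact Rz].
      destruct Hy' as [[_ <-] | Hy']; [exact Hz' |].
      destruct Hz' as [[_ <-] | Hz']; [right; exact Hy' |].
      right; eapply t_trans; eauto.
  - destruct He as [He1 He2], Hab as [k [Hak Hkb]].
    destruct (IHe1 He1 _ _ _ Hak Ra) as [k' [? Rk]].
    destruct (IHe2 He2 _ _ _ Hkb Rk) as [b' [? ?]]; eauto.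
  - destruct He as [He1 He2], Hab as [Hab | Hab].
    + destruct (IHe1 He1 _ _ _ Hab Ra) as [b' [? ?]]; eauto.
    + destruct (IHe2 He2 _ _ _ Hab Ra) as [b' [? ?]]; eauto.
Qed.

Lemma nre_sem_simulated G H e a b :
  simulated G H -> nre_const_tests e -> nre_sem G e a b ->
  ~ is_null a -> ~ is_null b -> nre_sem H e a b.
Proof.
  intros [R [HR Htotal]] He Hab Ha Hb.
  destruct (Htotal a (proj1 (nre_sem_node_of Hab))) as [a' Ra].
  destruct (HR _ _ Ra) as [_ [_ [_ [Ha' _]]]]; rewrite <- (Ha' Ha) in Ra.
  destruct (nre_sem_simulation HR He Hab Ra) as [b' [Hab' Rb]].
  destruct (HR _ _ Rb) as [_ [_ [_ [Hb' _]]]]; rewrite <- (Hb' Hb) in Hab'.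
  exact Hab'.
Qed.

Definition nodes_of G : list (node V) :=
  map (fun t => fst (fst t)) (triples G) ++ map snd (triples G) ++
  map snd (tfacts G) ++ lfacts G.

Lemma node_of_in_nodes_of G x : node_of G x -> In x (nodes_of G).
Proof.
  unfold nodes_of; rewrite !in_app_iff.
  intros [[p [o Hx]] | [[s [p Hx]] | [[T Hx] | Hx]]].
  - left; apply in_map_iff; exists (x, p, o); auto.
  - right; left; apply in_map_iff; exists (s, p, x); auto.
  - right; right; left; apply in_map_iff; exists (T, x); auto.
  - auto.
Qed.

Definition map_tgraph f G : tgraph V Tn := {|
  triples := map (fun t => (f (fst (fst t)), snd (fst t), f (snd t))) (triples G);
  tfacts := map (fun t => (fst t, f (snd t))) (tfacts G);
  lfacts := map f (lfacts G) |}.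

Lemma in_triples_map_tgraph f G s p o :
  In (s, p, o) (triples G) -> In (f s, p, f o) (triples (map_tgraph f G)).
Proof.
  intros Hin; exact (in_map (fun t => (f (fst (fst t)), snd (fst t), f (snd t))) _ _ Hin).
Qed.

Lemma in_triples_map_tgraph_inv f G s' p o' :
  In (s', p, o') (triples (map_tgraph f G)) ->
  exists s o, s' = f s /\ o' = f o /\ In (s, p, o) (triples G).
Proof.
  simpl; rewrite in_map_iff; intros [[[s q] o] [Heq Hin]].
  injection Heq as <- <- <-; eauto.
Qed.

Lemma in_tfacts_map_tgraph_inv f G T x' :
  In (T, x') (tfacts (map_tgraph f G)) -> exists x, x' = f x /\ In (T, x) (tfacts G).
Proof.
  simpl; rewrite in_map_iff; intros [[T' x] [Heq Hin]].
  injection Heq as <- <-; eauto.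
Qed.

Lemma has_type_map_tgraph f G (St : stype Tn) x :
  has_type G St x -> has_type (map_tgraph f G) St (f x).
Proof.
  destruct St; simpl; intros Hx; [apply (in_map (fun t => (fst t, f (snd t))) _ _ Hx) |].
  apply in_map; exact Hx.
Qed.

Lemma node_of_map_tgraph f G x' :
  node_of (map_tgraph f G) x' -> exists x, node_of G x /\ x' = f x.
Proof.
  intros [[p [o Hx]] | [[s [p Hx]] | [[T Hx] | Hx]]].
  - destruct (in_triples_map_tgraph_inv Hx) as [x [o' [-> [_ Hin]]]].
    exists x; split; [left |]; eauto.
  - destruct (in_triples_map_tgraph_inv Hx) as [s' [x [_ [-> Hin]]]].
    exists x; split; [right; left |]; eauto.
  - destruct (in_tfacts_map_tgraph_inv Hx) as [x [-> Hin]].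
    exists x; split; [right; right; left |]; eauto.
  - simpl in Hx; apply in_map_iff in Hx as [x [<- Hin]].
    exists x; split; [right; right; right |]; auto.
Qed.

Lemma tgraph_wf_map_tgraph f G :
  (forall x, is_literal (f x) -> is_literal x) ->
  tgraph_wf G -> tgraph_wf (map_tgraph f G).
Proof.
  intros Hlit HG s' p o' Hin.
  destruct (in_triples_map_tgraph_inv Hin) as [s [o [-> [_ Hso]]]].
  destruct (HG _ _ _ Hso) as [Hs Hp]; split; [| exact Hp].
  specialize (Hlit s); destruct (f s), s; simpl in *; tauto.
Qed.

End Graphs.

Lemma satisfies_map_tgraph (V : Univ) (S : shape_schema V) (G : tgraph V (Tn S))
  (f : node V -> node V) :
  (forall x y, node_of G x -> node_of G y -> f x = f y -> x = y) ->
  satisfies S G -> satisfies S (map_tgraph f G).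
Proof.
  intros Hinj HG T p St mu Hdelta x' Hx'.
  destruct (in_tfacts_map_tgraph_inv Hx') as [x [-> Hx]].
  destruct (HG _ _ _ _ Hdelta _ Hx) as [Htype [Hfun Htotal]].
  assert (Hsucc : forall o', In (f x, p, o') (triples (map_tgraph f G)) ->
                  exists o, o' = f o /\ In (x, p, o) (triples G)).
  { intros o' Ho'.
    destruct (in_triples_map_tgraph_inv Ho') as [x0 [o [Hfx [-> Hin]]]].
    assert (x = x0) as ->
      by (apply Hinj; [right; right; left | left |]; eauto).
    eauto. }
  split; [| split].
  - intros o' Ho'; destruct (Hsucc _ Ho') as [o [-> Ho]].
    apply has_type_map_tgraph, Htype, Ho.
  - intros Hmu o1' o2' Ho1 Ho2.
    destruct (Hsucc _ Ho1) as [o1 [-> H1]], (Hsucc _ Ho2) as [o2 [-> H2]].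
    f_equal; exact (Hfun Hmu _ _ H1 H2).
  - intros Hmu; destruct (Htotal Hmu) as [o Ho].
    exists (f o); apply in_triples_map_tgraph, Ho.
Qed.

Section Solutions.
Variables (V : Univ) (E : setting V) (I : instance V (RS E)).
Hypotheses (HE : setting_wf E) (HI : consistent_instance I).

Lemma eval_head_term_not_null d val a t :
  In d (tgds E) ->
  (forall r xs, In (r, xs) (body d) -> In (map val xs) (I r)) ->
  In a (head d) -> In t (hatom_terms a) -> ~ is_null (eval_hterm E val t).
Proof.
  intros Hd Hbody Ha Ht.
  destruct HE as [_ [_ [_ Htgds]]], (Htgds d Hd) as [_ Hhead].
  destruct (Hhead a Ha) as [_ Hterms], (Hterms t Ht) as [_ Hfull].
  destruct t as [x | f xs]; simpl; [| tauto].
  destruct (Hfull x (or_introl eq_refl)) as [r [xs [Hr Hx]]].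
  apply (proj2 (proj1 HI r _ (Hbody _ _ Hr))), in_map, Hx.
Qed.

Lemma solution_map_tgraph (G : tgraph V (Tn (SS E))) (f : node V -> node V) :
  (forall x, is_literal (f x) -> is_literal x) ->
  (forall x y, node_of G x -> node_of G y -> f x = f y -> x = y) ->
  (forall x, ~ is_null x -> f x = x) ->
  solution I G -> solution I (map_tgraph f G).
Proof.
  intros Hlit Hinj Hconst [Hwf [Hsat Htgds]].
  split; [apply tgraph_wf_map_tgraph; auto |].
  split; [apply satisfies_map_tgraph; auto |].
  intros d Hd val Hbody a Ha.
  assert (Hfix : forall t, In t (hatom_terms a) ->
                 f (eval_hterm E val t) = eval_hterm E val t).
  { intros t Ht; apply Hconst, (eval_head_term_not_null Hd Hbody Ha Ht). }
  pose proof (Htgds d Hd val Hbody a Ha) as Hholds.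
  destruct a as [t1 p t2 | T t | t]; simpl in *.
  - rewrite <- (Hfix t1), <- (Hfix t2) by auto; apply in_triples_map_tgraph, Hholds.
  - rewrite <- (Hfix t) by auto; exact (has_type_map_tgraph (St := STy T) f Hholds).
  - rewrite <- (Hfix t) by auto; exact (has_type_map_tgraph (St := SLiteral _) f Hholds).
Qed.

End Solutions.

Definition rename (V : Univ) (a b x : node V) : node V :=
  if excluded_middle_informative (x = a) then b else x.

Lemma rename_other (V : Univ) (a b x : node V) : x <> a -> rename a b x = x.
Proof. unfold rename; destruct (excluded_middle_informative (x = a)); tauto. Qed.

Lemma rename_neq (V : Univ) (a b x : node V) : b <> a -> rename a b x <> a.
Proof. unfold rename; destruct (excluded_middle_informative (x = a)); auto. Qed.

Lemma rename_inj_on (V : Univ) (P : node V -> Prop) (a b x y : node V) :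
  ~ P b -> P x -> P y -> rename a b x = rename a b y -> x = y.
Proof.
  unfold rename.
  destruct (excluded_middle_informative (x = a)), (excluded_middle_informative (y = a));
    intros Hb Hx Hy Hxy; subst; tauto.
Qed.

Lemma exists_fresh_of_kind (V : Univ) (L : list (node V)) (x : node V) :
  univ_ok V -> is_null x -> exists y, ~ In y L /\ (is_literal y <-> is_literal x).
Proof.
  intros [Hiri Hlit] Hx; destruct x as [i | k | l]; simpl in Hx; [contradiction | |].
  - destruct (Hiri (flat_map (fun y => match y with NNull _ k => [k] | _ => [] end) L))
      as [k' Hk']; exists (NNull V k'); simpl; split; [| tauto].
    intros Hin; apply Hk', in_flat_map; exists (NNull V k'); simpl; auto.
  - destruct (Hlit (flat_map (fun y => match y with NLit _ l => [l] | _ => [] end) L))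
      as [l' [_ Hl']]; exists (NLit V l'); simpl; split; [| tauto].
    intros Hin; apply Hl', in_flat_map; exists (NLit V l'); simpl; auto.
Qed.

Lemma solution_avoiding_null (V : Univ) (E : setting V) (I : instance V (RS E))
  (U : tgraph V (Tn (SS E))) (x : node V) :
  univ_ok V -> setting_wf E -> consistent_instance I -> solution I U -> is_null x ->
  exists J, solution I J /\ ~ node_of J x.
Proof.
  intros Huniv HE HI HU Hx.
  destruct (exists_fresh_of_kind (x :: nodes_of U) Huniv Hx) as [y [Hfresh Hkind]].
  assert (Hyx : y <> x) by (intros ->; apply Hfresh; left; reflexivity).
  exists (map_tgraph (rename x y) U); split.
  - apply solution_map_tgraph; auto.
    + intros z; unfold rename; destruct (excluded_middle_informative (z = x)); subst; tauto.
    + intros z w; apply (rename_inj_on (P := node_of U)).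
      intros Hy; apply Hfresh; right; apply node_of_in_nodes_of, Hy.
    + intros z Hz; apply rename_other; intros ->; contradiction.
  - intros Hnode; destruct (node_of_map_tgraph Hnode) as [z [_ Hz]].
    exact (rename_neq (x := z) Hyx (eq_sym Hz)).
Qed.

Theorem proposition4 (V : Univ) (E : setting V) (I : instance V (RS E))
  (e : nre V) (U : tgraph V (Tn (SS E))) (n m : node V) :
  univ_ok V ->
  setting_wf E ->
  setting_consistent E ->
  consistent_instance I ->
  nre_const_tests e ->
  universal_sim_solution I U ->
  (certain_answer I e n m <-> (nre_sem U e n m /\ ~ is_null n /\ ~ is_null m)).
Proof.
  intros Huniv HE _ HI He [HU Hsim]; split.
  - intros Hcert; split; [exact (Hcert U HU) |].
    split; intros Hnull;
      destruct (solution_avoiding_null Huniv HE HI HU Hnull) as [J [HJ Hnot]];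
      apply Hnot, (nre_sem_node_of (Hcert J HJ)).
  - intros [HnmU [Hn Hm]] J HJ.
    exact (nre_sem_simulated (Hsim J HJ) He HnmU Hn Hm).
Qed.
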